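(* Let $E$ be a real Hilbert space with $\dim(E)\ge2$, $h\in E$ a unit vector, $H^+=\{x\in E\mid (h,x)>0\}$, and define $\preceq$ on $H^+$ by $x\preceq y\iff\|x-y_\perp\|\le y_h$. If $x,y\in H^+$ satisfy $x\preceq y$ and $x\ne y$, then $\ln(x_h)<\ln(y_h)$.
   Context: For $x\in E$, $x_h=(h,x)$ and $x_\perp=x-(h,x)h$. *)

From HB Require Import structures.
From mathcomp Require Import all_boot all_order all_algebra.
From mathcomp Require Import all_classical all_reals all_analysis.
Set Implicit Arguments. Unset Strict Implicit. Unset Printing Implicit Defensive.
Import Order.TTheory GRing.Theory Num.Theory.
Import numFieldNormedType.Exports.
Local Open Scope ring_scope.

Definition is_inner_product (R : realType) (E : normedModType R)
  (ip : E -> E -> R) : Prop :=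
  [/\ (forall x y : E, ip x y = ip y x),
      (forall (a : R) (x y z : E), ip (a *: x + y) z = a * ip x z + ip y z)
    & (forall x : E, `|x| = Num.sqrt (ip x x))].

Definition dim_ge2 (R : realType) (E : normedModType R) : Prop :=
  exists u v : E, forall a b : R, a *: u + b *: v = 0 -> a = 0 /\ b = 0.

Definition comp_h (R : realType) (E : normedModType R) (ip : E -> E -> R)
  (h x : E) : R := ip h x.

Definition comp_perp (R : realType) (E : normedModType R) (ip : E -> E -> R)
  (h x : E) : E := x - (ip h x) *: h.

Definition Hplus (R : realType) (E : normedModType R) (ip : E -> E -> R)
  (h : E) : set E := [set x | 0 < ip h x].

Definition prec (R : realType) (E : normedModType R) (ip : E -> E -> R)
  (h x y : E) : Prop := `|x - comp_perp ip h y| <= comp_h ip h y.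

From HB Require Import structures.
From mathcomp Require Import all_boot all_order all_algebra.
From mathcomp Require Import all_classical all_reals all_analysis.
From mathcomp Require Import lra.
Import Order.TTheory GRing.Theory Num.Theory.
Import numFieldNormedType.Exports.
Local Open Scope ring_scope.

(* Since (h, x_perp) = 0 for every x, Pythagoras gives
   |x - y_perp|^2 = |x_perp - y_perp|^2 + x_h^2.  Hence x ≼ y forces
   x_h^2 <= y_h^2, with equality only if x_perp = y_perp, i.e. x = y;
   so x_h < y_h and ln is strictly increasing on (0, +oo). *)

Section InnerProduct.
Variables (R : realType) (E : normedModType R) (ip : E -> E -> R).
Hypothesis ipC : forall x y : E, ip x y = ip y x.
Hypothesis ip_linear :
  forall (a : R) (x y z : E), ip (a *: x + y) z = a * ip x z + ip y z.
Hypothesis ip_norm : forall x : E, `|x| = Num.sqrt (ip x x).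

Lemma ip0l z : ip 0 z = 0.
Proof.
have := ip_linear 1 0 0 z; rewrite scaler0 addr0 mul1r.
by move/(congr1 (fun t => t - ip 0 z)); rewrite subrr addrK.
Qed.

Lemma ipDl u v z : ip (u + v) z = ip u z + ip v z.
Proof. by rewrite -[u in LHS]scale1r ip_linear mul1r. Qed.

Lemma ipZl a u z : ip (a *: u) z = a * ip u z.
Proof. by rewrite -[_ *: u]addr0 ip_linear ip0l addr0. Qed.

Lemma ipNl u z : ip (- u) z = - ip u z.
Proof. by rewrite -scaleN1r ipZl mulN1r. Qed.

Lemma ipDr z u v : ip z (u + v) = ip z u + ip z v.
Proof. by rewrite ipC ipDl !(ipC z). Qed.

Lemma ipZr z a u : ip z (a *: u) = a * ip z u.
Proof. by rewrite ipC ipZl ipC. Qed.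

Lemma ipNr z u : ip z (- u) = - ip z u.
Proof. by rewrite ipC ipNl ipC. Qed.

Lemma ipxx u : ip u u = `|u| ^+ 2.
Proof.
have [->|u0] := eqVneq u 0; first by rewrite ip0l normr0 expr0n.
have : 0 < `|u| by rewrite normr_gt0.
by rewrite ip_norm sqrtr_gt0 => /ltW ?; rewrite sqr_sqrtr.
Qed.

Variable h : E.
Hypothesis h_unit : `|h| = 1.

Lemma iphh : ip h h = 1.
Proof. by rewrite ipxx h_unit expr1n. Qed.

Lemma ip_comp_perp x : ip h (comp_perp ip h x) = 0.
Proof. by rewrite /comp_perp ipDr ipNr ipZr iphh mulr1 subrr. Qed.

Lemma comp_perp_decomp x : x = comp_perp ip h x + comp_h ip h x *: h.
Proof. by rewrite /comp_perp subrK. Qed.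

Lemma norm_orth_add_sqr w a : ip h w = 0 -> `|w + a *: h| ^+ 2 = `|w| ^+ 2 + a ^+ 2.
Proof.
move=> wh; rewrite -!ipxx !ipDl !ipDr !ipZl !ipZr iphh (ipC w h) wh; lra.
Qed.

Lemma norm_sub_comp_perp_sqr x y :
  `|x - comp_perp ip h y| ^+ 2
    = `|comp_perp ip h x - comp_perp ip h y| ^+ 2 + comp_h ip h x ^+ 2.
Proof.
rewrite -norm_orth_add_sqr; last by rewrite ipDr ipNr !ip_comp_perp subrr.
by rewrite addrAC -comp_perp_decomp.
Qed.

Lemma prec_comp_h_lt x y :
  0 < comp_h ip h x -> prec ip h x y -> x <> y -> comp_h ip h x < comp_h ip h y.
Proof.
rewrite /prec => a_gt0 xy x_neq_y; have := norm_sub_comp_perp_sqr x y.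
set a := comp_h ip h x in a_gt0 *; set b := comp_h ip h y in xy *.
set d := comp_perp ip h x - comp_perp ip h y => sqr_eq.
have b_ge0 : 0 <= b := le_trans (normr_ge0 _) xy.
have sq_le : `|d| ^+ 2 + a ^+ 2 <= b ^+ 2 by rewrite -sqr_eq lerXn2r ?nnegrE.
rewrite ltNge; apply/negP => ba; apply: x_neq_y.
have d_ge0 := sqr_ge0 `|d|.
have ab : a = b by nra.
have : `|d| ^+ 2 == 0 by rewrite eq_le d_ge0 andbT; move: sq_le; rewrite ab; lra.
rewrite sqrf_eq0 normr_eq0 subr_eq0 => /eqP perp_eq.
by rewrite (comp_perp_decomp x) (comp_perp_decomp y) perp_eq -/a ab.
Qed.

End InnerProduct.

Theorem mainTheorem19 (R : realType) (E : completeNormedModType R)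
  (ip : E -> E -> R) (Hip : is_inner_product ip) (Hdim : dim_ge2 E)
  (h : E) (Hh : `|h| = 1) (x y : E)
  (Hx : Hplus ip h x) (Hy : Hplus ip h y)
  (Hxy : prec ip h x y) (Hneq : x <> y) :
  ln (comp_h ip h x) < ln (comp_h ip h y).
Proof.
case: Hip => ipC ip_linear ip_norm.
by rewrite ltr_ln ?posrE //; apply: prec_comp_h_lt.
Qed.
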